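(* Let $(\Lambda,d)$ be a $k$-graph and let $p\in\mathbb{N}^k$ with $p_i\ge1$ for $1\le i\le k$. Then the coordinate matrices $M^{p\Lambda}_1,\dots,M^{p\Lambda}_k$ of the dual $k$-graph $p\Lambda$ have all entries in $\{0,1\}$.
   Context: A $k$-graph is a pair $(\Lambda,d)$ where $\Lambda$ is a countable category and $d:\Lambda\to\mathbb{N}^k$ is a functor satisfying the factorisation property: if $d(\lambda)=m+n$ then there are unique $\mu\in d^{-1}(m)$, $\nu\in d^{-1}(n)$ with $\lambda=\mu\nu$. Vertices are identified with paths of degree $0$; $r,s$ are codomain and domain; $\Lambda^n:=d^{-1}(n)$; $e_1,\dots,e_k$ are the standard generators of $\mathbb{N}^k$. The coordinate matrices of a $k$-graph $\Gamma$ are the matrices $M^\Gamma_i$ ($1\le i\le k$) indexed by $\Gamma^0\times\Gamma^0$ with $(M^\Gamma_i)_{v,w}:=|\{\lambda\in\Gamma^{e_i}: r(\lambda)=w,\ s(\lambda)=v\}|$. For $d(\lambda)=n$ and $l\le m\le n$, $\lambda(l,m)$ is the unique path of degree $m-l$ with $\lambda=\lambda(0,l)\lambda(l,m)\lambda(m,n)$. The dual $k$-graph $p\Lambda$ has paths $\{\lambda:d(\lambda)\ge p\}$, vertices $\Lambda^p$, range $r_p(\lambda)=\lambda(0,p)$, source $s_p(\lambda)=\lambda(d(\lambda)-p,d(\lambda))$, composition $\lambda\circ_p\mu=\lambda\,\mu(p,d(\mu))$ when $s_p(\lambda)=r_p(\mu)$, degree $d_p(\lambda)=d(\lambda)-p$.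 *)

From HB Require Import structures.
From mathcomp Require Import all_boot.
From mathcomp Require Import classical_sets.
From Stdlib Require Import ClassicalEpsilon.

Set Implicit Arguments.
Unset Strict Implicit.
Unset Printing Implicit Defensive.
Local Open Scope classical_set_scope.

Definition NN (k : nat) := {ffun 'I_k -> nat}.

Definition zeroNN k : NN k := [ffun => 0%N].
Definition addNN k (m n : NN k) : NN k := [ffun j => (m j + n j)%N].
Definition subNN k (m n : NN k) : NN k := [ffun j => (m j - n j)%N].
Definition leNN k (m n : NN k) : bool := [forall j, m j <= n j].
Definition eNN k (i : 'I_k) : NN k := [ffun j => nat_of_bool (j == i)].

(* A k-graph: a countable category (arrows-only presentation: objects
   are the identity arrows, which are the paths of degree 0) with a
   degree functor d : Lambda -> N^k satisfying the factorisation property. *)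
Record kgraph (k : nat) := KGraph {
  kpath : countType;
  kr : kpath -> kpath;
  ks : kpath -> kpath;
  kcomp : kpath -> kpath -> kpath;         (* composition, meaningful when ks l = kr m *)
  kdeg : kpath -> NN k;
  kr_id : forall l, kr (kr l) = kr l /\ ks (kr l) = kr l;
  ks_id : forall l, kr (ks l) = ks l /\ ks (ks l) = ks l;
  kcomp_r : forall l m, ks l = kr m -> kr (kcomp l m) = kr l;
  kcomp_s : forall l m, ks l = kr m -> ks (kcomp l m) = ks m;
  kcomp_idl : forall l, kcomp (kr l) l = l;
  kcomp_idr : forall l, kcomp l (ks l) = l;
  kcomp_assoc : forall a b c, ks a = kr b -> ks b = kr c ->
      kcomp (kcomp a b) c = kcomp a (kcomp b c);
  kdeg_id : forall l, kdeg (kr l) = zeroNN k;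
  kdeg_comp : forall l m, ks l = kr m ->
      kdeg (kcomp l m) = addNN (kdeg l) (kdeg m);
  kfact : forall l (m n : NN k), kdeg l = addNN m n ->
      exists! mn : kpath * kpath,
        [/\ kdeg mn.1 = m, kdeg mn.2 = n, ks mn.1 = kr mn.2 & l = kcomp mn.1 mn.2]
}.

(* lambda(a,b): the unique path x of degree b - a with
   lambda = lambda(0,a) x lambda(b,d(lambda))  (for a <= b <= d(lambda)). *)
Definition seg k (L : kgraph k) (l : kpath L) (a b : NN k) : kpath L :=
  epsilon (inhabits l) (fun x => exists y z,
    kdeg y = a /\ kdeg x = subNN b a /\ kdeg z = subNN (kdeg l) b /\
    ks y = kr x /\ ks x = kr z /\ l = kcomp (kcomp y x) z).

(* Raw k-graph data needed to define coordinate matrices: a set of paths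
   (carved out of an ambient type), range, source and degree.
   Vertices are the paths of degree 0. *)
Record kdata (k : nat) := KData {
  dT : Type;
  dmem : dT -> Prop;
  dr : dT -> dT;
  ds : dT -> dT;
  ddeg : dT -> NN k
}.

Definition graph_data k (L : kgraph k) : kdata k :=
  @KData k (kpath L) (fun _ => True) (@kr k L) (@ks k L) (@kdeg k L).

Definition dual_data k (L : kgraph k) (p : NN k) : kdata k :=
  @KData k (kpath L)
    (fun l => leNN p (kdeg l))
    (fun l => seg l (zeroNN k) p)
    (fun l => seg l (subNN (kdeg l) p) (kdeg l))
    (fun l => subNN (kdeg l) p).

Definition is_vertex k (G : kdata k) (v : dT G) : Prop :=
  dmem v /\ ddeg v = zeroNN k.
Arguments is_vertex {k} G v.

(* The set whose cardinality is the (v,w) entry of the i-th coordinate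
   matrix M^G_i:  { lambda in G^{e_i} : r(lambda) = w, s(lambda) = v }. *)
Definition coord_set k (G : kdata k) (i : 'I_k) (v w : dT G) : set (dT G) :=
  [set l | [/\ dmem l, ddeg l = eNN i, dr l = w & ds l = v]].
Arguments coord_set {k} G i v w.

Definition entry01 k (G : kdata k) (i : 'I_k) (v w : dT G) : Prop :=
  coord_set G i v w = set0 \/ exists x, coord_set G i v w = [set x].
Arguments entry01 {k} G i v w.

From mathcomp Require Import all_boot classical_sets.
From Stdlib Require Import ClassicalEpsilon.

(* An edge l of the dual graph from v to w has degree p + e_i, with
   l(0,p) = w and l(e_i, p + e_i) = v.  Since p_i >= 1, the vertex v
   factors as v = b c with d(c) = e_i; then l = l(0,e_i) b c, and also
   l = w l(p, p + e_i).  Uniqueness of factorisations forces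
   l(p, p + e_i) = c, so l = w c is determined by v and w. *)

Set Implicit Arguments.
Unset Strict Implicit.
Unset Printing Implicit Defensive.
Local Open Scope classical_set_scope.

Section NNArith.
Variable k : nat.
Implicit Types m n : NN k.

Lemma addNNC m n : addNN m n = addNN n m.
Proof. by apply/ffunP => j; rewrite !ffunE addnC. Qed.

Lemma addNN0 m : addNN m (zeroNN k) = m.
Proof. by apply/ffunP => j; rewrite !ffunE addn0. Qed.

Lemma subNN0 m : subNN m (zeroNN k) = m.
Proof. by apply/ffunP => j; rewrite !ffunE subn0. Qed.

Lemma subNNn m : subNN m m = zeroNN k.
Proof. by apply/ffunP => j; rewrite !ffunE subnn. Qed.

Lemma addKNN m n : subNN (addNN m n) m = n.
Proof. by apply/ffunP => j; rewrite !ffunE addKn. Qed.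

Lemma addNNK m n : subNN (addNN m n) n = m.
Proof. by apply/ffunP => j; rewrite !ffunE addnK. Qed.

Lemma addIN n m1 m2 : addNN m1 n = addNN m2 n -> m1 = m2.
Proof. by move=> e; rewrite -(addNNK m1 n) e addNNK. Qed.

Lemma subNNKC m n : leNN m n -> addNN m (subNN n m) = n.
Proof. by move=> /forallP le_mn; apply/ffunP => j; rewrite !ffunE subnKC. Qed.

Lemma leNN_eNN (i : 'I_k) n : leNN (eNN i) n = (1 <= n i)%N.
Proof.
apply/forallP/idP => [/(_ i)|n_i j]; first by rewrite ffunE eqxx.
by rewrite ffunE; case: eqP => [->|].
Qed.

End NNArith.

Section KGraph.
Variables (k : nat) (L : kgraph k).
Implicit Types l x y : kpath L.

Lemma kfactP l m n : kdeg l = addNN m n ->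
  exists x y, [/\ kdeg x = m, kdeg y = n, ks x = kr y & l = kcomp x y].
Proof. by case/kfact => -[x y] [[/= dx dy xy lxy] _]; exists x, y. Qed.

Lemma kcomp_inj x y (x' y' : kpath L) : ks x = kr y -> ks x' = kr y' ->
  kdeg x = kdeg x' -> kdeg y = kdeg y' -> kcomp x y = kcomp x' y' ->
  x = x' /\ y = y'.
Proof.
move=> xy x'y' dx dy e.
have [mn [_ uniq]] := kfact (kdeg_comp xy).
have := uniq (x', y') (And4 (esym dx) (esym dy) x'y' e).
by rewrite (uniq (x, y) (And4 erefl erefl xy erefl)) => -[].
Qed.

Lemma kcomp_injl x y (x' y' : kpath L) : ks x = kr y -> ks x' = kr y' ->
  kdeg x = kdeg x' -> kcomp x y = kcomp x' y' -> x = x' /\ y = y'.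
Proof.
move=> xy x'y' dx e; apply: kcomp_inj => //.
apply: (@addIN _ (kdeg x)).
by rewrite !(addNNC _ (kdeg x)) -kdeg_comp // e kdeg_comp // dx.
Qed.

Lemma kcomp_injr x y (x' y' : kpath L) : ks x = kr y -> ks x' = kr y' ->
  kdeg y = kdeg y' -> kcomp x y = kcomp x' y' -> x = x' /\ y = y'.
Proof.
move=> xy x'y' dy e; apply: kcomp_inj => //.
by apply: (@addIN _ (kdeg y)); rewrite -kdeg_comp // e kdeg_comp // dy.
Qed.

Lemma kdeg0_id y : kdeg y = zeroNN k -> kr y = y /\ ks y = y.
Proof.
move=> dy; have [sy_id _] := ks_id y; have [_ sry] := kr_id y.
have [-> ys] : kr y = y /\ y = ks y.
  apply: kcomp_inj sry (esym sy_id) _ _ _.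
  - by rewrite kdeg_id dy.
  - by rewrite -sy_id kdeg_id dy.
  - by rewrite kcomp_idl kcomp_idr.
by rewrite -ys.
Qed.

Lemma kcomp0l y x : kdeg y = zeroNN k -> ks y = kr x -> kcomp y x = x.
Proof. by move=> /kdeg0_id [_ sy] yx; rewrite -sy yx kcomp_idl. Qed.

Lemma kcomp0r x z : kdeg z = zeroNN k -> ks x = kr z -> kcomp x z = x.
Proof. by move=> /kdeg0_id [rz _] xz; rewrite -rz -xz kcomp_idr. Qed.

Definition is_seg l a b x := exists y z,
  kdeg y = a /\ kdeg x = subNN b a /\ kdeg z = subNN (kdeg l) b /\
  ks y = kr x /\ ks x = kr z /\ l = kcomp (kcomp y x) z.

Lemma segP l a b : (exists x, is_seg l a b x) -> is_seg l a b (seg l a b).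
Proof. exact: epsilon_spec. Qed.

Lemma seg_prefix l x y : ks x = kr y -> l = kcomp x y ->
  seg l (zeroNN k) (kdeg x) = x.
Proof.
move=> xy lxy; have [_ srx] := kr_id x.
have [|y0 [z [dy0 [ds [_ [y0s [sz]]]]]]] := @segP l (zeroNN k) (kdeg x).
  exists x, (kr x), y; rewrite kdeg_id subNN0 kcomp_idl lxy kdeg_comp // addKNN.
  by do !split.
rewrite (kcomp0l dy0 y0s) => e.
by case: (kcomp_injl sz xy _ (etrans (esym e) lxy)); rewrite // ds subNN0.
Qed.

Lemma seg_suffix l x y : ks x = kr y -> l = kcomp x y ->
  seg l (subNN (kdeg l) (kdeg y)) (kdeg l) = y.
Proof.
move=> xy lxy.
have dl : kdeg l = addNN (kdeg x) (kdeg y) by rewrite lxy kdeg_comp.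
have [ry_id _] := ks_id y.
have [|y0 [z [_ [ds [dz [y0s [sz]]]]]]] :=
  @segP l (subNN (kdeg l) (kdeg y)) (kdeg l).
  exists y, x, (ks y); rewrite dl addNNK addKNN subNNn -ry_id kdeg_id ry_id.
  by rewrite lxy kcomp_assoc ?kcomp_idr ?ry_id; do ?split.
rewrite subNNn in dz; rewrite (kcomp0r dz) ?(kcomp_s y0s) // => e.
case: (kcomp_injr y0s xy _ (etrans (esym e) lxy)) => //.
by rewrite ds dl addNNK addKNN.
Qed.

End KGraph.

Section DualGraph.
Variables (k : nat) (L : kgraph k) (p : NN k).

Lemma dual_vertex_deg v : is_vertex (dual_data L p) v -> kdeg v = p.
Proof. by case=> /= /subNNKC e d0; rewrite -e d0 addNN0. Qed.

Lemma dual_coord_set_sub1 (i : 'I_k) v w : (1 <= p i)%N -> kdeg v = p ->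
  exists c, coord_set (dual_data L p) i v w `<=` [set kcomp w c].
Proof.
move=> p_i dv.
have [b [c [_ dc bc vbc]]] : exists b c, [/\ kdeg b = subNN p (eNN i),
    kdeg c = eNN i, ks b = kr c & v = kcomp b c].
  by apply: kfactP; rewrite dv addNNC subNNKC // leNN_eNN.
exists c => l [/= le_pl dl rl sl].
have [w' [c' [dw' dc' w'c' lw'c']]] : exists w' c', [/\ kdeg w' = p,
    kdeg c' = eNN i, ks w' = kr c' & l = kcomp w' c'].
  by apply: kfactP; rewrite -dl subNNKC.
have [g [v' [_ dv' gv' lgv']]] : exists g v', [/\ kdeg g = eNN i,
    kdeg v' = p, ks g = kr v' & l = kcomp g v'].
  by apply: kfactP; rewrite addNNC -dl subNNKC.
have ww' : w = w' by rewrite -rl -dw' (seg_prefix w'c' lw'c').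
have vv' : v = v' by rewrite -sl -dv' (seg_suffix gv' lgv').
have gb : ks g = kr b by rewrite gv' -vv' vbc kcomp_r.
have lgbc : l = kcomp (kcomp g b) c by rewrite kcomp_assoc // -vbc vv'.
have [_ c'c] := kcomp_injr w'c' (etrans (kcomp_s gb) bc) (etrans dc' (esym dc))
  (etrans (esym lw'c') lgbc).
by rewrite lw'c' ww' c'c.
Qed.

End DualGraph.

Theorem corollary3p9 (k : nat) (L : kgraph k) (p : NN k)
  (hp : forall i : 'I_k, (1 <= p i)%N) :
  forall (i : 'I_k) (v w : kpath L),
    is_vertex (dual_data L p) v -> is_vertex (dual_data L p) w ->
    entry01 (dual_data L p) i v w.
Proof.
move=> i v w /dual_vertex_deg dv _; rewrite /entry01.
have [c /subset_set1 [->|->]] := dual_coord_set_sub1 w (hp i) dv.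
- by left.
- by right; exists (kcomp w c).
Qed.
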